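(* Let $G$ be a graph on $t>1000$ vertices. For $i\in\{2,3\}$ let $e_i$ be the number of edges of $G$ of weight $i$, and let $\bar{e}$ be the number of edges of the complement of $G$. If $\bar{e}\le t^2/4$, then $w(G)=2^{e_2}3^{e_3}\le 2^{\binom{t}{2}}2^{-0.16\bar{e}}$. If $\bar{e}>t^2/4$, then $w(G)<3^{t^2/4}$.
   Context: For a graph $G$, give each edge weight $2$ if it belongs to some triangle of $G$ and weight $3$ otherwise; $w(G)$ is the product of the weights of all edges of $G$. *)

From mathcomp Require Import all_boot.
From Stdlib Require Import Reals.
Set Implicit Arguments. Unset Strict Implicit. Unset Printing Implicit Defensive.

(* A simple graph on a finite vertex type T is a symmetric irreflexive relation e. *)

Definition edges (T : finType) (e : rel T) : {set {set T}} :=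
  [set A : {set T} | [exists x, exists y, (x != y) && e x y && (A == [set x; y])]].

Definition in_triangle (T : finType) (e : rel T) (A : {set T}) : bool :=
  [exists z, [forall x in A, e x z]].

Definition edge_weight (T : finType) (e : rel T) (A : {set T}) : nat :=
  if in_triangle e A then 2 else 3.

Definition w (T : finType) (e : rel T) : nat :=
  \prod_(A in edges e) edge_weight e A.

Definition e2 (T : finType) (e : rel T) : nat :=
  #|[set A in edges e | in_triangle e A]|.
Definition e3 (T : finType) (e : rel T) : nat :=
  #|[set A in edges e | ~~ in_triangle e A]|.

Definition compl_rel (T : finType) (e : rel T) : rel T :=
  fun x y => (x != y) && ~~ e x y.
Definition ebar (T : finType) (e : rel T) : nat := #|edges (compl_rel e)|.

(* An edge xy of weight 3 lies in no triangle, so every third vertex misses x or y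
   in G; hence n x + n y >= t - 2, where n is the degree in the complement.
   Summing this over the weight-3 edges and comparing with a per-vertex
   quadratic estimate gives 5 e3 <= 7 ebar for t > 1000.  Since
   e2 + e3 + ebar = C(t,2), the first bound follows from log2 3 <= 8/5
   (as 1.4 * 0.6 = 0.84), and the second from w <= 3^(e2+e3) with
   e2 + e3 = C(t,2) - ebar < t^2/4. *)

From Stdlib Require Import ZArith.
From mathcomp Require Import all_boot zify.
Set Implicit Arguments. Unset Strict Implicit. Unset Printing Implicit Defensive.

Lemma vertex_estimate (t d n : Z) : (1000 < t -> 0 <= d -> 0 <= n -> d + n <= t ->
  14 * d + 14 * (d * n) <= 7 * t * n + 2 * t * d)%Z.
Proof.
move=> ht hd hn hdn.
have [small|large] := Z_le_gt_dec (14 * n + 14) (2 * t).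
- have : (0 <= d * (2 * t - 14 - 14 * n))%Z by apply: Z.mul_nonneg_nonneg; lia.
  lia.
- have : (0 <= (t - n - d) * (14 * n + 14 - 2 * t))%Z by apply: Z.mul_nonneg_nonneg; lia.
  have : (0 <= (4 * t - 9 * n) * (4 * t - 9 * n))%Z by apply: Z.square_nonneg.
  have : (0 <= n * (n - 142))%Z by apply: Z.mul_nonneg_nonneg; lia.
  lia.
Qed.

Section Degrees.
Variable T : finType.

Definition deg (r : rel T) (x : T) : nat := \sum_y ((x != y) && r x y : nat).

Lemma handshake (r : rel T) : symmetric r -> \sum_x deg r x = 2 * #|edges r|.
Proof.
move=> r_sym; rewrite /deg pair_big /=.
rewrite (eq_bigr (fun p : T * T => if (p.1 != p.2) && r p.1 p.2 then 1 else 0)) //.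
rewrite -big_mkcond /=.
rewrite (partition_big (fun p : T * T => [set p.1; p.2]) (mem (edges r))) /=; last first.
  case=> a b /= /andP[ab rab]; rewrite inE.
  by apply/existsP; exists a; apply/existsP; exists b; rewrite ab rab /=.
rewrite mulnC -sum_nat_const; apply: eq_bigr => A.
rewrite inE => /existsP[x /existsP[y /andP[/andP[xy rxy] /eqP ->]]].
rewrite (eq_bigl (mem [set (x, y); (y, x)])); last first.
  case=> a b /=; rewrite !inE; apply/idP/idP.
  - case/andP=> /andP[ab rab] /eqP E.
    have : a \in [set x; y] by rewrite -E !inE eqxx.
    have : b \in [set x; y] by rewrite -E !inE eqxx orbT.
    rewrite !inE => /orP[] /eqP Eb /orP[] /eqP Ea; subst a b;
      rewrite ?eqxx ?orbT //; by rewrite eqxx in ab.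
  - case/orP=> /eqP[-> ->]; first by rewrite xy rxy eqxx.
    by rewrite (eq_sym y x) xy r_sym rxy setUC eqxx.
by rewrite sum1_card cards2 xpair_eqE negb_and xy.
Qed.

Lemma sum_eq1 (x : T) : \sum_y ((y == x) : nat) = 1.
Proof. by rewrite (bigD1 x) //= eqxx big1 // => y /negbTE ->. Qed.

Lemma sum_neq1 (x : T) : \sum_y ((x != y) : nat) = #|T| - 1.
Proof.
rewrite -sum1_card [in RHS](bigD1 x) //= addKn (bigD1 x) //= eqxx add0n.
by apply: eq_bigr => y /negbTE; rewrite eq_sym => ->.
Qed.

Lemma edges_setIdE (e : rel T) (P : {set T} -> bool) :
  [set A in edges e | P A] = edges (fun x y => e x y && P [set x; y]).
Proof.
apply/setP => A; rewrite !inE; apply/idP/idP.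
- case/andP=> /existsP[x /existsP[y /andP[/andP[xy exy] /eqP EA]]] PA.
  by apply/existsP; exists x; apply/existsP; exists y; rewrite xy exy -EA PA eqxx.
- case/existsP=> x /existsP[y /andP[/andP[xy /andP[exy PA]] /eqP EA]].
  rewrite EA PA andbT; apply/existsP; exists x; apply/existsP; exists y.
  by rewrite xy exy eqxx.
Qed.

Lemma in_triangle2 (e : rel T) x y :
  in_triangle e [set x; y] = [exists z, e x z && e y z].
Proof.
apply/existsP/existsP => [[z /forallP H]|[z /andP[exz eyz]]]; exists z.
- by have := H x; have := H y; rewrite !inE !eqxx orbT /= => -> ->.
- by apply/forallP => u; rewrite !inE; apply/implyP => /orP[] /eqP ->.
Qed.

End Degrees.

Section TriangleFreeEdges.
Variables (T : finType) (e : rel T).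
Hypothesis e_sym : symmetric e.

Definition no_tri_rel : rel T := fun x y => e x y && ~~ in_triangle e [set x; y].
Definition tri_rel : rel T := fun x y => e x y && in_triangle e [set x; y].

Lemma no_tri_rel_sym : symmetric no_tri_rel.
Proof. by move=> x y; rewrite /no_tri_rel e_sym setUC. Qed.

Lemma tri_rel_sym : symmetric tri_rel.
Proof. by move=> x y; rewrite /tri_rel e_sym setUC. Qed.

Lemma compl_rel_sym : symmetric (compl_rel e).
Proof. by move=> x y; rewrite /compl_rel e_sym eq_sym. Qed.

Lemma e2_edges : e2 e = #|edges tri_rel|.
Proof. by rewrite /e2 edges_setIdE. Qed.

Lemma e3_edges : e3 e = #|edges no_tri_rel|.
Proof. by rewrite /e3 edges_setIdE. Qed.

Lemma deg_partition x :
  deg tri_rel x + deg no_tri_rel x + deg (compl_rel e) x = #|T| - 1.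
Proof.
rewrite -(sum_neq1 x) /deg -!big_split; apply: eq_bigr => y _ /=.
rewrite /tri_rel /no_tri_rel /compl_rel.
by case: (x == y); case: (e x y); case: (in_triangle _ _).
Qed.

Lemma edge_count_double : 2 * (e2 e + e3 e + ebar e) = #|T| * (#|T| - 1).
Proof.
rewrite e2_edges e3_edges /ebar !mulnDr.
rewrite -(handshake tri_rel_sym) -(handshake no_tri_rel_sym).
rewrite -(handshake compl_rel_sym) -!big_split /=.
by rewrite (eq_bigr (fun=> #|T| - 1)) ?sum_nat_const // => x _; exact: deg_partition.
Qed.

Lemma edge_count : e2 e + e3 e + ebar e = 'C(#|T|, 2).
Proof. by rewrite bin2 -subn1 -edge_count_double mul2n doubleK. Qed.

Local Notation d := (deg no_tri_rel).
Local Notation n := (deg (compl_rel e)).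

Lemma deg_no_tri_compl x : d x + n x <= #|T|.
Proof.
rewrite /d /n /deg -big_split -sum1_card; apply: leq_sum => y _ /=.
rewrite /no_tri_rel /compl_rel.
by case: (x == y); case: (e x y); case: (in_triangle _ _).
Qed.

Lemma no_tri_codeg x y : x != y -> no_tri_rel x y -> #|T| <= n x + n y + 2.
Proof.
move=> xy /andP[exy]; rewrite in_triangle2 negb_exists => /forallP no_z.
rewrite -sum1_card.
have -> : 2 = \sum_z (((z == x) : nat) + ((z == y) : nat)).
  by rewrite big_split /= !sum_eq1.
rewrite /n /deg -!big_split; apply: leq_sum => z _ /=.
have := no_z z; rewrite /compl_rel (eq_sym x z) (eq_sym y z).
by case: (z == x); case: (z == y); case: (e x z); case: (e y z).
Qed.

Lemma codeg_sum : (#|T| - 2) * \sum_x d x <= 2 * \sum_x d x * n x.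
Proof.
have half_sum : \sum_x \sum_y ((x != y) && no_tri_rel x y : nat) * n y
              = \sum_x d x * n x.
  rewrite exchange_big; apply: eq_bigr => y _; rewrite /d /deg big_distrl.
  by apply: eq_bigr => x _; rewrite eq_sym no_tri_rel_sym.
have -> : 2 * \sum_x d x * n x
        = \sum_x \sum_y ((x != y) && no_tri_rel x y : nat) * (n x + n y).
  rewrite mul2n -addnn -{2}half_sum -big_split /=; apply: eq_bigr => x _.
  by rewrite /d /deg big_distrl -big_split; apply: eq_bigr => y _; rewrite mulnDr.
rewrite big_distrr; apply: leq_sum => x _.
rewrite /d /deg big_distrr; apply: leq_sum => y _.
case: (boolP ((x != y) && no_tri_rel x y)) => [/andP[xy h]|_] /=; last by rewrite muln0.
by rewrite muln1 mul1n leq_subLR addnC; exact: no_tri_codeg.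
Qed.

Lemma e3_ebar : 1000 < #|T| -> 5 * e3 e <= 7 * ebar e.
Proof.
move=> ht; rewrite e3_edges /ebar.
have DS : 2 * #|edges no_tri_rel| = \sum_x d x by rewrite (handshake no_tri_rel_sym).
have NS : 2 * #|edges (compl_rel e)| = \sum_x n x by rewrite (handshake compl_rel_sym).
have summed : 14 * \sum_x d x + 14 * \sum_x d x * n x
              <= 7 * #|T| * \sum_x n x + 2 * #|T| * \sum_x d x.
  rewrite !big_distrr -!big_split; apply: leq_sum => x _ /=.
  move: (deg_no_tri_compl x) ht; move: (d x) (n x) #|T| => dx nx t hdn ht'.
  by have := @vertex_estimate (Z.of_nat t) (Z.of_nat dx) (Z.of_nat nx); lia.
have codeg := codeg_sum.
move: summed codeg DS NS.
set D := \sum_x d x; set N := \sum_x n x; set S := \sum_x d x * n x.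
move=> summed codeg DS NS.
(* 14 D + 7 (t - 2) D <= 14 D + 14 S <= 7 t N + 2 t D *)
have : #|T| * (5 * D) <= #|T| * (7 * N) by nia.
by rewrite leq_pmul2l; lia.
Qed.

End TriangleFreeEdges.

Lemma expn_Natpow (m k : nat) : expn m k = Nat.pow m k.
Proof. by elim: k => // k IH; rewrite expnS IH. Qed.

Lemma w_eq (T : finType) (e : rel T) : w e = 2 ^ e2 e * 3 ^ e3 e.
Proof.
rewrite /w (bigID (in_triangle e)) /e2 /e3 -!prod_nat_const /=.
by congr (_ * _); apply: eq_big => A; rewrite ?inE // /edge_weight => /andP[_];
  case: (in_triangle e A).
Qed.

From Stdlib Require Import Reals Lra Psatz.

Section RealBounds.
Local Open Scope R_scope.

Lemma five_ln3_le_eight_ln2 : 5 * ln 3 <= 8 * ln 2.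
Proof.
have -> : 5 * ln 3 = ln (3 ^ 5) by rewrite ln_pow; [simpl; lra | lra].
have -> : 8 * ln 2 = ln (2 ^ 8) by rewrite ln_pow; [simpl; lra | lra].
by left; apply: ln_increasing; simpl; lra.
Qed.

Lemma exp_le_mono (x y : R) : x <= y -> exp x <= exp y.
Proof. by case=> [/exp_increasing /Rlt_le | ->]; [| right]. Qed.

Lemma weight_le_pow2 (a b c m : nat) :
  (a + b + c = m)%nat -> (5 * b <= 7 * c)%nat ->
  2 ^ a * 3 ^ b <= 2 ^ m * Rpower 2 (- (16 / 100) * INR c).
Proof.
move=> abc bc.
have Rabc : INR a + INR b + INR c = INR m by rewrite -abc !plus_INR.
have Rbc : 5 * INR b <= 7 * INR c.
  by move/leP/le_INR: bc; rewrite !mult_INR /=; lra.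
have l2 : 0 < ln 2 by have := ln_lt_2; lra.
have := five_ln3_le_eight_ln2; have := pos_INR b.
rewrite -!Rpower_pow; try lra.
rewrite /Rpower -!exp_plus => pb l3.
apply: exp_le_mono; rewrite -Rabc.
have : 0 <= INR b * (8 * ln 2 - 5 * ln 3) by apply: Rmult_le_pos; lra.
have : 0 <= (7 * INR c - 5 * INR b) * ln 2 by apply: Rmult_le_pos; lra.
nra.
Qed.

Lemma weight_lt_pow3 (a b c t : nat) :
  (2 * (a + b + c) = t * (t - 1))%nat -> INR c > INR t ^ 2 / 4 ->
  2 ^ a * 3 ^ b < Rpower 3 (INR t ^ 2 / 4).
Proof.
move=> abc hc.
have Rabc : 2 * (INR a + INR b + INR c) <= INR t * INR t.
  have : (2 * (a + b + c) <= t * t)%nat by rewrite abc leq_mul2l leq_subr orbT.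
  by move/leP/le_INR; rewrite !mult_INR !plus_INR.
apply: (Rle_lt_trans _ (3 ^ a * 3 ^ b)).
  by apply: Rmult_le_compat_r; [apply: pow_le | apply: pow_incr]; lra.
rewrite -pow_add -Rpower_pow; last lra.
by apply: Rpower_lt; rewrite ?plus_INR /=; lra.
Qed.

End RealBounds.

Theorem lemma4p3 (T : finType) (e : rel T)
    (e_sym : symmetric e) (e_irr : irreflexive e) (ht : 1000 < #|T|) :
  w e = 2 ^ e2 e * 3 ^ e3 e /\
  ((INR (ebar e) <= INR #|T| ^ 2 / 4)%R ->
     (INR (w e) <= 2 ^ 'C(#|T|, 2) * Rpower 2 (- (16 / 100) * INR (ebar e)))%R) /\
  ((INR (ebar e) > INR #|T| ^ 2 / 4)%R ->
     (INR (w e) < Rpower 3 (INR #|T| ^ 2 / 4))%R).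
Proof.
have w_pow : w e = 2 ^ e2 e * 3 ^ e3 e by rewrite w_eq !expn_Natpow.
split=> //; split=> [_|hc]; rewrite w_pow mult_INR !pow_INR !(INR_IZR_INZ (S _)) /=.
- exact: weight_le_pow2 (edge_count e_sym) (e3_ebar e_sym ht).
- exact: weight_lt_pow3 (edge_count_double e_sym) hc.
Qed.
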